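(* Let $\Sigma$ be a finite alphabet. (1) For any $\lambda\in[0,1]$ there is a quantum automaton $\mathcal{A}$ over $\Sigma$ such that $f^{\mathrm{ND}}_{\mathcal{A}}(w)=\lambda$ for all $w\in\Sigma^\omega$. (2) For any quantum automaton $\mathcal{A}$ over $\Sigma$ and $\lambda\in[0,1]$ there is a quantum automaton $\mathcal{B}$ over $\Sigma$ with $f^{\mathrm{ND}}_{\mathcal{B}}(w)=\lambda f^{\mathrm{ND}}_{\mathcal{A}}(w)$ for all $w\in\Sigma^\omega$. (3) For any quantum automaton $\mathcal{A}$ over $\Sigma$ and $\lambda\in[0,1]$ there is a quantum automaton $\mathcal{B}$ over $\Sigma$ with $f^{\mathrm{ND}}_{\mathcal{B}}(w)=\lambda f^{\mathrm{ND}}_{\mathcal{A}}(w)+(1-\lambda)$ for all $w\in\Sigma^\omega$.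
   Context: A quantum automaton is a tuple $\mathcal{A}=(\mathcal{H},|s_0\rangle,\Sigma,\{U_\sigma:\sigma\in\Sigma\},F)$ where $\mathcal{H}$ is a finite-dimensional complex Hilbert space, $|s_0\rangle$ a unit vector, $\Sigma$ a finite alphabet, each $U_\sigma$ unitary, and $F$ a subspace. For $w=\sigma_1\sigma_2\cdots\in\Sigma^\omega$ the non-disturbing run is $|s_n\rangle=U_{\sigma_n}\cdots U_{\sigma_1}|s_0\rangle$ and $f^{\mathrm{ND}}_{\mathcal{A}}(w)=\sup_{|\psi\rangle}\sup_{\{n_i\}}\inf_{i\ge1}|\langle\psi|s_{n_i}\rangle|^2$ over unit $|\psi\rangle\in F$ and strictly increasing sequences $0\le n_1<n_2<\cdots$. *)

From HB Require Import structures.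
From mathcomp Require Import all_boot all_order all_algebra.
From mathcomp Require Import all_classical all_reals.
From mathcomp.real_closed Require Import complex.
Set Implicit Arguments. Unset Strict Implicit. Unset Printing Implicit Defensive.
Import Order.TTheory GRing.Theory Num.Theory.
Local Open Scope ring_scope.
Local Open Scope classical_set_scope.

Section QA.
Variable R : realType.
Local Notation C := (R[i]).

Definition sqmod (z : C) : R := (@complex.Re R z) ^+ 2 + (@complex.Im R z) ^+ 2.

Definition adjmx m n (A : 'M[C]_(m, n)) : 'M[C]_(n, m) := (map_mx (@conjc R) A)^T.

Definition inner d (psi s : 'cV[C]_d) : C := (adjmx psi *m s) 0 0.

Definition unit_vec d (s : 'cV[C]_d) : Prop := inner s s = 1.

Definition unitary d (U : 'M[C]_d) : Prop := adjmx U *m U = 1%:M.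

(* A quantum automaton (H = C^qdim, |s0>, Sigma, {U_sigma}, F);
   the subspace F is the row space of the matrix qF, i.e. a column vector
   psi lies in F iff (psi^T <= qF)%MS. *)
Record qaut (Sigma : finType) := QAut {
  qdim : nat;
  qs0 : 'cV[C]_qdim;
  qU : Sigma -> 'M[C]_qdim;
  qF : 'M[C]_qdim;
  qs0_unit : unit_vec qs0;
  qU_unitary : forall a, unitary (qU a)
}.

Definition in_subspace d (F : 'M[C]_d) (psi : 'cV[C]_d) : bool := (psi^T <= F)%MS.

(* infinite words w = sigma_1 sigma_2 ... are maps nat -> Sigma, w 0 = sigma_1 *)
Fixpoint run (Sigma : finType) (A : qaut Sigma) (w : nat -> Sigma) (n : nat)
  : 'cV[C]_(qdim A) :=
  match n with
  | 0 => qs0 A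
  | n'.+1 => qU A (w n') *m run A w n'
  end.

(* f^ND_A(w) = sup_{psi unit in F} sup_{n_1 < n_2 < ...} inf_{i >= 1} |<psi|s_{n_i}>|^2;
   the sequence (n_i)_{i>=1} is encoded as ns : nat -> nat with ns k = n_(k+1). *)
Definition fND (Sigma : finType) (A : qaut Sigma) (w : nat -> Sigma) : R :=
  sup [set x : R | exists (psi : 'cV[C]_(qdim A)) (ns : nat -> nat),
        [/\ unit_vec psi, in_subspace (qF A) psi,
            (forall k, (ns k < ns k.+1)%N) &
            x = inf [set sqmod (inner psi (run A w (ns k))) | k in [set: nat]]]].

End QA.

From mathcomp Require Import all_boot all_order all_algebra.
From mathcomp Require Import all_classical all_reals.
From mathcomp.real_closed Require Import complex.
From mathcomp Require Import normedtype sequences.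
From mathcomp Require Import ring lra.
Import Order.TTheory GRing.Theory Num.Theory numFieldNormedType.Exports.

(* Pad A with one extra coordinate that every letter fixes, put amplitude
   sqrt(lam) on the initial state of A and sqrt(1 - lam) on the new coordinate,
   and accept either F or F extended by the new coordinate.
   In the first case every overlap <psi|s_n> is scaled by sqrt(lam), so f^ND
   is scaled by lam.  In the second, a unit vector (p, q) has overlap
   sqrt(lam) <p|s_n> + q^* sqrt(1 - lam); the triangle and Cauchy-Schwarz
   inequalities bound its squared modulus by lam |<p/|p| | s_n>|^2 + 1 - lam.
   Conversely, if x = inf_k |<psi|s_(n_k)>|^2, Bolzano-Weierstrass gives a
   subsequence along which <psi|s_(n_k)> has almost constant phase; aligning
   q with that phase and weighting psi and q optimally comes within eps of
   lam x + 1 - lam.  Part (1) is part (3) with weight 1 - lam applied to an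
   automaton whose accepting subspace is zero. *)

Set Implicit Arguments. Unset Strict Implicit. Unset Printing Implicit Defensive.
Local Open Scope ring_scope.

Section ComplexNorm.
Variable R : realType.
Local Open Scope complex_scope.
Local Open Scope ring_scope.
Local Notation C := R[i].
Local Notation normc := (@Normc.normc R).

Lemma sqmodE (z : C) : (sqmod z)%:C = z * conjc z.
Proof.
case: z => a b; rewrite /sqmod /=; apply/eqP; rewrite eq_complex /=.
by apply/andP; split; apply/eqP; ring.
Qed.

Lemma sqmod_ge0 (z : C) : 0 <= sqmod z.
Proof. by rewrite /sqmod addr_ge0 // sqr_ge0. Qed.

Lemma sqmodM (x y : C) : sqmod (x * y) = sqmod x * sqmod y.
Proof. by case: x => a b; case: y => c e; rewrite /sqmod /=; ring. Qed.

Lemma sqmodR (a : R) : sqmod a%:C = a ^+ 2.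
Proof. by rewrite /sqmod /= expr0n addr0. Qed.

Lemma sqmodJ (z : C) : sqmod (conjc z) = sqmod z.
Proof. by case: z => a b; rewrite /sqmod /= sqrrN. Qed.

Lemma normc_sqmod (z : C) : normc z = Num.sqrt (sqmod z).
Proof. by case: z. Qed.

Lemma normr_Re_le_normc (z : C) : `|complex.Re z| <= normc z.
Proof. by case: z => a b /=; rewrite -sqrtr_sqr ler_wsqrtr // lerDl sqr_ge0. Qed.

Lemma normr_Im_le_normc (z : C) : `|complex.Im z| <= normc z.
Proof. by case: z => a b /=; rewrite -sqrtr_sqr ler_wsqrtr // lerDr sqr_ge0. Qed.

Lemma Re_le_normc (z : C) : complex.Re z <= normc z.
Proof. exact: le_trans (ler_norm _) (normr_Re_le_normc z). Qed.

Lemma normc_le_Re_Im (z : C) : normc z <= `|complex.Re z| + `|complex.Im z|.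
Proof.
case: z => a b /=; rewrite -[leRHS]ger0_norm ?addr_ge0 // -sqrtr_sqr ler_wsqrtr //.
rewrite sqrrD !real_normK ?num_real //.
have := mulr_ge0 (normr_ge0 a) (normr_ge0 b); lra.
Qed.

Lemma Re_scale (a : R) (z : C) : complex.Re (a%:C * z) = a * complex.Re z.
Proof. by case: z => x y /=; rewrite mul0r subr0. Qed.

Definition phase (z : C) : C := if z == 0 then 1 else ((normc z)^-1)%:C * z.

Lemma sqmod_phase (z : C) : sqmod (phase z) = 1.
Proof.
rewrite /phase; case: eqP => [_|/eqP z0]; first by rewrite /sqmod /= expr1n expr0n addr0.
have nz : normc z != 0 by apply: contra z0 => /eqP/Normc.eq0_normc ->.
rewrite sqmodM sqmodR normc_sqmod exprVn sqr_sqrtr ?sqmod_ge0 // mulVf //.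
by apply: contra nz => /eqP s0; rewrite normc_sqmod s0 sqrtr0.
Qed.

Lemma Re_mul_conj_phase (z : C) : complex.Re (z * conjc (phase z)) = normc z.
Proof.
rewrite /phase; case: eqP => [->|/eqP z0]; first by rewrite mul0r Normc.normc0.
have nz : normc z != 0 by apply: contra z0 => /eqP/Normc.eq0_normc ->.
rewrite rmorphM /= oppr0 mulrCA -sqmodE Re_scale /= normc_sqmod.
by rewrite -[X in _ * X]sqr_sqrtr ?sqmod_ge0 // -normc_sqmod mulrC expr2 mulfK.
Qed.

Lemma Re_phase_ge0 (z : C) : 0 <= complex.Re z -> 0 <= complex.Re (phase z).
Proof.
rewrite /phase; case: eqP => // _ z0; rewrite Re_scale mulr_ge0 // invr_ge0.
by rewrite normc_sqmod sqrtr_ge0.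
Qed.

Lemma sqr_Re_mul_conj_le (w e : C) : sqmod e = 1 -> 0 <= complex.Re (w * conjc e) ->
  complex.Re (w * conjc e) ^+ 2 <= sqmod w.
Proof.
move=> e1 Re0; have : complex.Re (w * conjc e) <= normc w.
  by rewrite -[normc w]mulr1 -[1]sqrtr1 -e1 -sqmodJ -!normc_sqmod -Normc.normcM Re_le_normc.
rewrite -ler_sqr ?nnegrE ?normc_sqmod ?sqrtr_ge0 // sqr_sqrtr //; exact: sqmod_ge0.
Qed.

Lemma normc_le_Re_mul_conj_phase (u z0 : C) :
  normc u <= complex.Re (u * conjc (phase z0)) + 2 * normc (u - z0).
Proof.
have e1 : normc (conjc (phase z0)) = 1 by rewrite normc_sqmod sqmodJ sqmod_phase sqrtr1.
have hRe : - normc (u - z0) <= complex.Re ((u - z0) * conjc (phase z0)).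
  rewrite lerNl -normcN -[in leRHS](mulr1 (normc _)) -e1 -Normc.normcM.
  by rewrite -raddfN /= -mulNr Re_le_normc.
have hu : normc u <= normc z0 + normc (u - z0).
  by rewrite -{1}(subrKC z0 u); apply: le_normcD.
have -> : u * conjc (phase z0) = z0 * conjc (phase z0) + (u - z0) * conjc (phase z0).
  by rewrite -mulrDl subrKC.
rewrite raddfD /= Re_mul_conj_phase; lra.
Qed.

Lemma complex_bolzano_weierstrass (z : nat -> C) : (forall k, sqmod (z k) <= 1) ->
  exists z0 (m : nat -> nat), (forall i, (m i < m i.+1)%N) /\
    forall d, 0 < d -> exists N, forall i, (N <= i)%N -> normc (z (m i) - z0) < d.
Proof.
move=> z1.
have bnd (f : nat -> R) : (forall k, `|f k| <= 1) -> bounded_fun f.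
  by move=> f1; exists 1; split => // M M1 k _; apply: le_trans (f1 k) (ltW M1).
have normc1 k : normc (z k) <= 1 by rewrite normc_sqmod -sqrtr1 ler_wsqrtr.
have Re1 k : `|complex.Re (z k)| <= 1 := le_trans (normr_Re_le_normc _) (normc1 k).
have Im1 k : `|complex.Im (z k)| <= 1 := le_trans (normr_Im_le_normc _) (normc1 k).
have [f1 f1_incr cvg1] := bolzano_weierstrass (bnd _ Re1).
have [f2 f2_incr cvg2] := bolzano_weierstrass (bnd _ (fun k => Im1 (f1 k))).
exists (limn ((fun k => complex.Re (z k)) \o f1) +i*
        limn ((fun k => complex.Im (z (f1 k))) \o f2))%C.
have f12 : increasing_seq (f1 \o f2) by move=> a b; rewrite /= f1_incr; exact: f2_incr.
exists (f1 \o f2); split; first exact: (increasing_seqP (f1 \o f2)).2 f12.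
move=> d d0; have d20 : 0 < d / 2 by rewrite divr_gt0.
have [N1 _ h1] := cvgr_dist_lt _ _ cvg1 _ d20.
have [N2 _ h2] := cvgr_dist_lt _ _ cvg2 _ d20.
exists (maxn N1 N2) => i; rewrite geq_max => /andP[iN1 iN2].
have f2_ge j : (j <= f2 j)%N.
  by elim: j => // j IH; apply: leq_ltn_trans IH ((increasing_seqP f2).2 f2_incr j).
have f2N1 : (N1 <= f2 i)%N := leq_trans iN1 (f2_ge i).
move: (h1 _ f2N1) (h2 _ iN2) => /=; move: (limn _) (limn _) => b0 a0.
rewrite !(distrC a0) !(distrC b0) => hRe hIm.
apply: le_lt_trans (normc_le_Re_Im _) _; rewrite raddfB [complex.Im _]raddfB /=; lra.
Qed.

Lemma phase_aligned_subseq (z : nat -> C) (eps : R) :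
  (forall k, sqmod (z k) <= 1) -> 0 < eps ->
  exists2 e, sqmod e = 1 & exists2 m : nat -> nat, (forall i, (m i < m i.+1)%N) &
    forall i, normc (z (m i)) <= complex.Re (z (m i) * conjc e) + eps.
Proof.
move=> z1 eps0; have [z0 [m [m_incr z0_lim]]] := complex_bolzano_weierstrass z1.
have [N hN] := z0_lim (eps / 2) (divr_gt0 eps0 (ltr0Sn _ 1)).
exists (phase z0); first exact: sqmod_phase.
exists (fun i => m (i + N)%N) => [i|i]; first by rewrite addSn m_incr.
apply: le_trans (normc_le_Re_mul_conj_phase _ z0) _; rewrite lerD2l.
by have := hN (i + N)%N (leq_addl _ _); lra.
Qed.

Lemma unit_weights_attaining_norm (a b : R) : 0 <= a ->
  exists al be, [/\ 0 <= al, al ^+ 2 + be ^+ 2 = 1 &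
                    a * al + b * be = Num.sqrt (a ^+ 2 + b ^+ 2)].
Proof.
move=> a0; have := sqmod_phase (a +i* b)%C; have := Re_mul_conj_phase (a +i* b)%C.
have := Re_phase_ge0 (z := (a +i* b)%C) a0.
case: (phase _) => al be /= al0 Re_al be_al; exists al, be; split => //.
by rewrite -Re_al mulrN opprK.
Qed.

Lemma sqmod_add_le (u v : C) (a b c d : R) :
  0 <= a -> 0 <= b -> 0 <= c -> 0 <= d -> sqmod u = a * c -> sqmod v = b * d ->
  sqmod (u + v) <= (a + b) * (c + d).
Proof.
move=> a0 b0 c0 d0 uE vE.
have cs (x y s t : R) : (x * s + y * t) ^+ 2 <= (x ^+ 2 + y ^+ 2) * (s ^+ 2 + t ^+ 2).
  rewrite -subr_ge0; have -> : (x ^+ 2 + y ^+ 2) * (s ^+ 2 + t ^+ 2) - (x * s + y * t) ^+ 2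
    = (x * t - y * s) ^+ 2 by ring.
  exact: sqr_ge0.
have tri : normc (u + v) <= Num.sqrt a * Num.sqrt c + Num.sqrt b * Num.sqrt d.
  by rewrite -!sqrtrM // -uE -vE -!normc_sqmod le_normcD.
rewrite -[sqmod _]sqr_sqrtr ?sqmod_ge0 // -normc_sqmod.
apply: (le_trans (y := (Num.sqrt a * Num.sqrt c + Num.sqrt b * Num.sqrt d) ^+ 2)).
  rewrite ler_sqr ?nnegrE ?addr_ge0 ?mulr_ge0 ?sqrtr_ge0 //.
  by rewrite normc_sqmod sqrtr_ge0.
by have := cs (Num.sqrt a) (Num.sqrt b) (Num.sqrt c) (Num.sqrt d); rewrite !sqr_sqrtr.
Qed.

Lemma sqmod_add_aligned_ge (z e : C) (a b r eps : R) :
  sqmod e = 1 -> 0 <= a <= 1 -> 0 <= eps -> 0 <= a * r + b <= 1 ->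
  r <= normc z -> normc z <= complex.Re (z * conjc e) + eps ->
  (a * r + b) ^+ 2 - 2 * eps <= sqmod (a%:C * z + b%:C * e).
Proof.
move=> e1 /andP[a0 a1] eps0 /andP[N0 N1] rz z_aligned; set N := a * r + b.
have ReE : complex.Re ((a%:C * z + b%:C * e) * conjc e)
    = a * complex.Re (z * conjc e) + b.
  rewrite mulrDl -!mulrA -sqmodE e1 raddfD /= !Re_scale /=; lra.
have Re_ge : N - eps <= complex.Re ((a%:C * z + b%:C * e) * conjc e).
  rewrite ReE; have : a * (r - eps) <= a * complex.Re (z * conjc e).
    by rewrite ler_wpM2l //; lra.
  have : a * eps <= eps by rewrite ler_piMl.
  rewrite /N mulrBr; lra.
have N2 : N ^+ 2 <= N by rewrite expr2 ler_piMl.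
have [N_le|N_gt] := leP N eps; first by have := sqmod_ge0 (a%:C * z + b%:C * e); lra.
apply: le_trans (sqr_Re_mul_conj_le e1 _); last by apply: le_trans Re_ge; lra.
apply: le_trans (_ : (N - eps) ^+ 2 <= _); first by nra.
by rewrite ler_sqr ?nnegrE //; lra.
Qed.

End ComplexNorm.

Lemma row_mx_sub_block_diag (F : fieldType) m n (a : 'rV[F]_m) (b : 'rV[F]_n)
    (A : 'M_m) (B : 'M_n) :
  (row_mx a b <= block_mx A 0 0 B)%MS = (a <= A)%MS && (b <= B)%MS.
Proof.
apply/idP/andP => [/submxP[D] | [/submxP[D1 ->] /submxP[D2 ->]]].
  rewrite -(hsubmxK D) mul_row_block !mulmx0 addr0 add0r => /eq_row_mx[-> ->].
  by split; apply: submxMl.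
by apply/submxP; exists (row_mx D1 D2); rewrite mul_row_block !mulmx0 addr0 add0r.
Qed.

Section InnerProduct.
Variable R : realType.
Local Open Scope complex_scope.
Local Open Scope ring_scope.
Local Notation C := R[i].

Lemma innerE d (p s : 'cV[C]_d) : inner p s = \sum_i conjc (p i 0) * s i 0.
Proof. by rewrite /inner /adjmx !mxE; apply: eq_bigr => i _; rewrite !mxE. Qed.

Lemma inner_conj d (p s : 'cV[C]_d) : inner s p = conjc (inner p s).
Proof.
rewrite !innerE rmorph_sum; apply: eq_bigr => i _.
by rewrite rmorphM /= conjcK mulrC.
Qed.

Lemma innerDl d (p q s : 'cV[C]_d) : inner (p + q) s = inner p s + inner q s.
Proof.
by rewrite !innerE -big_split; apply: eq_bigr => i _; rewrite mxE rmorphD mulrDl.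
Qed.

Lemma innerDr d (p s t : 'cV[C]_d) : inner p (s + t) = inner p s + inner p t.
Proof. by rewrite !innerE -big_split; apply: eq_bigr => i _; rewrite mxE mulrDr. Qed.

Lemma innerZl d (p s : 'cV[C]_d) a : inner (a *: p) s = conjc a * inner p s.
Proof.
by rewrite !innerE mulr_sumr; apply: eq_bigr => i _; rewrite mxE rmorphM mulrA.
Qed.

Lemma innerZr d (p s : 'cV[C]_d) a : inner p (a *: s) = a * inner p s.
Proof. by rewrite !innerE mulr_sumr; apply: eq_bigr => i _; rewrite mxE mulrCA. Qed.

Lemma inner0l d (s : 'cV[C]_d) : inner 0 s = 0.
Proof. by rewrite -(scale0r 0) innerZl rmorph0 mul0r. Qed.

Lemma inner_ge0 d (p : 'cV[C]_d) : 0 <= inner p p.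
Proof. rewrite innerE; apply: sumr_ge0 => i _; rewrite mulrC; exact: mulcJ_ge0. Qed.

Lemma inner_col_mx d1 d2 (p s : 'cV[C]_d1) (q t : 'cV[C]_d2) :
  inner (col_mx p q) (col_mx s t) = inner p s + inner q t.
Proof.
rewrite !innerE big_split_ord /=; congr (_ + _); apply: eq_bigr => i _.
  by rewrite !col_mxEu.
by rewrite !col_mxEd.
Qed.

Lemma inner_cV1 (p s : 'cV[C]_1) : inner p s = conjc (p 0 0) * s 0 0.
Proof. by rewrite innerE big_ord1. Qed.

Lemma adjmxM m n k (A : 'M[C]_(m, n)) (B : 'M[C]_(n, k)) :
  adjmx (A *m B) = adjmx B *m adjmx A.
Proof. by rewrite /adjmx map_mxM trmx_mul. Qed.

Lemma adjmx_block m1 m2 n1 n2 (A : 'M[C]_(m1, n1)) (B : 'M[C]_(m1, n2))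
    (D : 'M[C]_(m2, n1)) (E : 'M[C]_(m2, n2)) :
  adjmx (block_mx A B D E) = block_mx (adjmx A) (adjmx D) (adjmx B) (adjmx E).
Proof. by rewrite /adjmx map_block_mx tr_block_mx. Qed.

Lemma adjmx0 m n : adjmx (0 : 'M[C]_(m, n)) = 0.
Proof. by rewrite /adjmx map_mx0 trmx0. Qed.

Lemma unitary1 n : unitary (1%:M : 'M[C]_n).
Proof. by rewrite /unitary /adjmx map_mx1 trmx1 mulmx1. Qed.

Lemma unitary_block_diag m n (U : 'M[C]_m) (V : 'M[C]_n) :
  unitary U -> unitary V -> unitary (block_mx U 0 0 V).
Proof.
rewrite /unitary => hU hV; rewrite adjmx_block !adjmx0 mulmx_block.
by rewrite !mulmx0 !mul0mx !addr0 !add0r hU hV -scalar_mx_block.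
Qed.

Lemma inner_unitary d (U : 'M[C]_d) (x y : 'cV[C]_d) : unitary U ->
  inner (U *m x) (U *m y) = inner x y.
Proof.
by move=> hU; rewrite /inner adjmxM mulmxA -(mulmxA (adjmx x)) hU mulmx1.
Qed.

Definition sqnorm d (p : 'cV[C]_d) : R := complex.Re (inner p p).

Lemma sqnormE d (p : 'cV[C]_d) : (sqnorm p)%:C = inner p p.
Proof.
by have := inner_ge0 p; rewrite /sqnorm; case: (inner p p) => a b /andP[/eqP -> _].
Qed.

Lemma sqnorm_ge0 d (p : 'cV[C]_d) : 0 <= sqnorm p.
Proof. by rewrite -ler0c sqnormE inner_ge0. Qed.

Lemma unit_vecP d (p : 'cV[C]_d) : unit_vec p <-> sqnorm p = 1.
Proof. by rewrite /unit_vec -sqnormE; split => [/complexI|->]. Qed.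

Lemma sqnormZ d a (p : 'cV[C]_d) : sqnorm (a *: p) = sqmod a * sqnorm p.
Proof.
apply: complexI; rewrite rmorphM /= !sqnormE sqmodE innerZl innerZr.
by rewrite mulrA [conjc a * a]mulrC.
Qed.

Lemma sqnorm0 d : sqnorm (0 : 'cV[C]_d) = 0.
Proof. by rewrite -(scale0r 0) sqnormZ sqmodR expr0n mul0r. Qed.

Lemma sqnorm_col_mx d1 d2 (p : 'cV[C]_d1) (q : 'cV[C]_d2) :
  sqnorm (col_mx p q) = sqnorm p + sqnorm q.
Proof. by rewrite /sqnorm inner_col_mx raddfD. Qed.

Lemma sqnorm_cV1 (q : 'cV[C]_1) : sqnorm q = sqmod (q 0 0).
Proof. by apply: complexI; rewrite sqnormE sqmodE inner_cV1 mulrC. Qed.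

Lemma sqmod_inner_le d (p s : 'cV[C]_d) : unit_vec s -> sqmod (inner p s) <= sqnorm p.
Proof.
move=> us; set c := inner s p.
have := inner_ge0 (p + (- c) *: s).
rewrite !innerDl !innerDr !innerZl !innerZr us -/c (inner_conj s p) -/c mulr1.
rewrite rmorphN /= -lecR sqnormE sqmodJ sqmodE.
have -> : inner p p + - c * conjc c + (- conjc c * c + - conjc c * (- c))
   = inner p p - c * conjc c by ring.
by rewrite subr_ge0.
Qed.

End InnerProduct.

Section SupInf.
Variable R : realType.
Local Open Scope classical_set_scope.
Implicit Types (f g : nat -> R) (S T : set R).

Lemma inf_range_le f y k : (forall k, y <= f k) -> inf (range f) <= f k.
Proof. by move=> fy; apply: ge_inf; [exists y => _ [j _ <-] | exists k]. Qed.

Lemma inf_range_ge f y : (forall k, y <= f k) -> y <= inf (range f).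
Proof. by move=> fy; apply: lb_le_inf; [exists (f 0%N), 0%N | move=> _ [k _ <-]]. Qed.

Lemma inf_range_cst (c : R) : inf (range (fun _ : nat => c)) = c.
Proof.
by apply/le_anti; rewrite (inf_range_le 0 (y := c)) //= (inf_range_ge (y := c)).
Qed.

Lemma inf_range_affine_le f g lam c : 0 <= lam ->
  (forall k, 0 <= f k) -> (forall k, 0 <= g k) -> (forall k, f k <= lam * g k + c) ->
  inf (range f) <= lam * inf (range g) + c.
Proof.
move=> lam0 f0 g0 fg; have [lam_eq0|lam_neq0] := eqVneq lam 0.
  have := fg 0%N; rewrite lam_eq0 !mul0r !add0r; exact: le_trans (inf_range_le 0 f0).
have lam_gt0 : 0 < lam by rewrite lt_def lam_neq0.
rewrite -lerBlDr -ler_pdivrMl //; apply: inf_range_ge => k.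
by rewrite ler_pdivrMl // lerBlDr; apply: le_trans (fg k); exact: inf_range_le.
Qed.

Lemma inf_rangeZ f lam : 0 <= lam -> (forall k, 0 <= f k) ->
  inf (range (fun k => lam * f k)) = lam * inf (range f).
Proof.
move=> lam0 f0; apply/le_anti/andP; split.
  rewrite -[leRHS]addr0; apply: inf_range_affine_le => // k.
    exact: mulr_ge0.
  by rewrite addr0.
by apply: inf_range_ge => k; rewrite ler_wpM2l // (inf_range_le _ f0).
Qed.

Lemma sup_imageZ S lam : 0 <= lam -> sup [set lam * x | x in S] = lam * sup S.
Proof.
move=> lam0; have [->|lam_neq0] := eqVneq lam 0.
  rewrite mul0r; have [->|/set0P[x Sx]] := eqVneq S set0; first by rewrite image_set0 sup0.
  suff -> : [set 0 * x | x in S] = [set 0] by rewrite sup1.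
  apply/seteqP; split => y /=; first by case=> z _ <-; rewrite mul0r.
  by move=> ->; exists x => //; rewrite mul0r.
have lam_gt0 : 0 < lam by rewrite lt_def lam_neq0.
have [hs|hs] := pselect (has_sup S); last first.
  rewrite (sup_out hs) mulr0 sup_out // => -[[_ [x Sx _]] [u ub]]; apply: hs.
  split; first by exists x.
  by exists (u / lam) => y Sy; rewrite ler_pdivlMr // mulrC; apply: ub; exists y.
have hi : has_sup [set lam * x | x in S].
  case: hs => [[x Sx] [u ub]]; split; first by exists (lam * x), x.
  by exists (lam * u) => _ [y Sy <-]; rewrite ler_wpM2l // ub.
apply/le_anti/andP; split.
  apply: ge_sup; first by case: hi.
  by move=> _ [y Sy <-]; rewrite ler_wpM2l //; apply: (ub_le_sup hs.2).
rewrite mulrC -ler_pdivlMr //; apply: ge_sup; first by case: hs.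
by move=> y Sy; rewrite ler_pdivlMr // mulrC; apply: (ub_le_sup hi.2); exists y.
Qed.

Lemma affine_sup_le S T lam c : 0 <= lam -> has_ubound T -> T c ->
  (forall x eps, S x -> 0 < eps -> exists2 y, T y & lam * x + c - eps <= y) ->
  lam * sup S + c <= sup T.
Proof.
move=> lam0 T_ub Tc approx.
have Tc_le : c <= sup T by apply: ub_le_sup.
have S_le x : S x -> lam * x + c <= sup T.
  move=> Sx; apply/ler_addgt0Pr => eps eps0.
  by have [y Ty le_y] := approx x eps Sx eps0; have := ub_le_sup T_ub Ty; lra.
have [hs|hs] := pselect (has_sup S); last by rewrite sup_out // mulr0 add0r.
have [->|lam_neq0] := eqVneq lam 0; first by rewrite mul0r add0r.
have lam_gt0 : 0 < lam by rewrite lt_def lam_neq0.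
rewrite -lerBrDr mulrC -ler_pdivlMr //; apply: ge_sup; first by case: hs.
by move=> x Sx; rewrite ler_pdivlMr // lerBrDr mulrC; apply: S_le.
Qed.

End SupInf.

Section NonDisturbing.
Variables (R : realType) (Sigma : finType).
Local Open Scope complex_scope.
Local Open Scope ring_scope.
Local Open Scope classical_set_scope.
Local Notation C := R[i].
Implicit Types (A : qaut R Sigma) (w : nat -> Sigma).

Lemma unit_vec_run A w n : unit_vec (run A w n).
Proof.
elim: n => [|n IH] /=; first exact: qs0_unit.
by rewrite /unit_vec inner_unitary //; apply: qU_unitary.
Qed.

Lemma sqmod_inner_run_le1 A w (psi : 'cV[C]_(qdim A)) n :
  unit_vec psi -> sqmod (inner psi (run A w n)) <= 1.
Proof. by move/unit_vecP => <-; apply: sqmod_inner_le; exact: unit_vec_run. Qed.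

Definition fND_values A w : set R := [set x | exists psi ns,
  [/\ unit_vec psi, in_subspace (qF A) psi, (forall k, (ns k < ns k.+1)%N) &
      x = inf (range (fun k => sqmod (inner psi (run A w (ns k)))))]].

Lemma fNDE A w : fND A w = sup (fND_values A w). Proof. by []. Qed.

Lemma fND_values_itv A w x : fND_values A w x -> 0 <= x <= 1.
Proof.
case=> psi [ns [u _ _ ->]]; have f0 k : 0 <= sqmod (inner psi (run A w (ns k))).
  exact: sqmod_ge0.
rewrite inf_range_ge //=; apply: le_trans (inf_range_le 0 f0) _.
exact: sqmod_inner_run_le1.
Qed.

Lemma has_ubound_fND_values A w : has_ubound (fND_values A w).
Proof. by exists 1 => x /fND_values_itv /andP[]. Qed.

Lemma fND_values_le A w x : fND_values A w x -> x <= fND A w.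
Proof. exact: ub_le_sup (has_ubound_fND_values A w) x. Qed.

Lemma fND_ge0 A w : 0 <= fND A w.
Proof.
rewrite fNDE; have [->|/set0P[x Ax]] := eqVneq (fND_values A w) set0.
  by rewrite sup0.
by apply: le_trans (fND_values_le Ax); case/andP: (fND_values_itv Ax).
Qed.

Lemma inner_run_factor A w (p : 'cV[C]_(qdim A)) : in_subspace (qF A) p ->
  exists2 G : nat -> R,
    forall n, 0 <= G n /\ sqmod (inner p (run A w n)) = sqnorm p * G n &
    forall ns, (forall k, (ns k < ns k.+1)%N) -> inf (range (G \o ns)) <= fND A w.
Proof.
move=> pF; have [p0|p_neq0] := eqVneq (sqnorm p) 0.
  exists (fun _ => 0) => [n|ns _]; last first.
    by apply: le_trans (fND_ge0 A w); rewrite inf_range_cst.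
  split => //; apply/eqP; rewrite p0 mulr0 eq_le sqmod_ge0 andbT -p0.
  exact/sqmod_inner_le/unit_vec_run.
set s := Num.sqrt (sqnorm p).
have s_gt0 : 0 < s by rewrite sqrtr_gt0 lt_def p_neq0 sqnorm_ge0.
set ph := (s^-1)%:C *: p.
have pE : p = s%:C *: ph by rewrite /ph scalerA -rmorphM mulfV ?gt_eqF // scale1r.
have ph_unit : unit_vec ph.
  apply/unit_vecP; rewrite sqnormZ sqmodR exprVn -[sqnorm p](sqr_sqrtr (sqnorm_ge0 p)).
  by rewrite mulVf // expf_neq0 // gt_eqF.
have phF : in_subspace (qF A) ph by rewrite /in_subspace linearZ /= scalemx_sub.
exists (fun n => sqmod (inner ph (run A w n))) => [n|ns ns_incr].
  split; first exact: sqmod_ge0.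
  by rewrite {1}pE innerZl conjc_real sqmodM sqmodR sqr_sqrtr // sqnorm_ge0.
by apply: fND_values_le; exists ph, ns.
Qed.

End NonDisturbing.

Section Padding.
Variables (R : realType) (Sigma : finType) (A : qaut R Sigma) (lam : R).
Hypothesis lam01 : 0 <= lam <= 1.
Local Open Scope complex_scope.
Local Open Scope ring_scope.
Local Open Scope classical_set_scope.
Local Notation C := R[i].
Local Notation normc := (@Normc.normc R).

Definition pad_s0 : 'cV[C]_(qdim A + 1) :=
  col_mx ((Num.sqrt lam)%:C *: qs0 A) (const_mx (Num.sqrt (1 - lam))%:C).

Lemma pad_s0_unit : unit_vec pad_s0.
Proof.
have [lam0 lam1] := andP lam01.
apply/unit_vecP; rewrite sqnorm_col_mx sqnormZ sqnorm_cV1 mxE !sqmodR.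
by rewrite !sqr_sqrtr ?subr_ge0 // ((unit_vecP _).1 (qs0_unit A)) mulr1 addrC subrK.
Qed.

Definition pad_qaut (accept_extra : bool) : qaut R Sigma :=
  @QAut R Sigma (qdim A + 1) pad_s0 (fun a => block_mx (qU A a) 0 0 1%:M)
    (block_mx (qF A) 0 0 (if accept_extra then 1%:M else 0)) pad_s0_unit
    (fun a => unitary_block_diag (qU_unitary A a) (unitary1 _ _)).

Lemma pad_vec_split t (psi : 'cV[C]_(qdim (pad_qaut t))) :
  exists p q, psi = col_mx p q.
Proof.
by exists (usubmx (psi : 'cV_(qdim A + 1))), (dsubmx (psi : 'cV_(qdim A + 1)));
  rewrite vsubmxK.
Qed.

Lemma inner_pad_run t w n (p : 'cV[C]_(qdim A)) (q : 'cV[C]_1) :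
  inner (col_mx p q) (run (pad_qaut t) w n) =
  (Num.sqrt lam)%:C * inner p (run A w n) + conjc (q 0 0) * (Num.sqrt (1 - lam))%:C.
Proof.
suff -> : run (pad_qaut t) w n =
    col_mx ((Num.sqrt lam)%:C *: run A w n) (const_mx (Num.sqrt (1 - lam))%:C).
  by rewrite inner_col_mx innerZr inner_cV1 mxE.
elim: n => [|n IH] //=; rewrite IH mul_block_col !mul0mx addr0 add0r mul1mx.
by rewrite scalemxAr.
Qed.

Lemma in_pad_subspace t (p : 'cV[C]_(qdim A)) (q : 'cV[C]_1) :
  in_subspace (qF (pad_qaut t)) (col_mx p q) = in_subspace (qF A) p && (t || (q == 0)).
Proof.
rewrite /in_subspace /= tr_col_mx row_mx_sub_block_diag.
by case: t => /=; rewrite ?submx1 ?andbT // submx0 trmx_eq0.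
Qed.

Lemma fND_pad_reject w : fND (pad_qaut false) w = lam * fND A w.
Proof.
have [lam0 _] := andP lam01.
have inf_reject (p : 'cV[C]_(qdim A)) (ns : nat -> nat) : unit_vec p ->
    inf (range (fun k => sqmod (inner (col_mx p 0) (run (pad_qaut false) w (ns k))))) =
    lam * inf (range (fun k => sqmod (inner p (run A w (ns k))))).
  move=> p_unit; rewrite -inf_rangeZ //; last by move=> k; exact: sqmod_ge0.
  congr inf; apply: eq_imagel => k _.
  by rewrite inner_pad_run mxE rmorph0 mul0r addr0 sqmodM sqmodR sqr_sqrtr.
have unit_reject (p : 'cV[C]_(qdim A)) : unit_vec (col_mx p (0 : 'cV_1)) <-> unit_vec p.
  by rewrite !unit_vecP sqnorm_col_mx sqnorm0 addr0.
rewrite !fNDE -sup_imageZ //; congr sup; apply/seteqP; split => [y | _ [_ [psi [ns [u pF ns_incr ->]]]] <-].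
  case=> psi [ns [u psiF ns_incr ->]]; have [p [q psiE]] := pad_vec_split psi; subst psi.
  move: psiF; rewrite in_pad_subspace /= => /andP[pF /eqP q0]; subst q.
  exists (inf (range (fun k => sqmod (inner p (run A w (ns k)))))).
    by exists p, ns; split => //; exact: (unit_reject p).1.
  by rewrite inf_reject //; exact: (unit_reject p).1.
exists (col_mx psi 0), ns; split => //; first exact: (unit_reject psi).2.
  by rewrite in_pad_subspace pF eqxx.
by rewrite inf_reject.
Qed.

Lemma fND_values_pad_extra w : fND_values (pad_qaut true) w (1 - lam).
Proof.
have [_ lam1] := andP lam01.
exists (col_mx 0 (const_mx 1)), id; split => //.
- by apply/unit_vecP; rewrite sqnorm_col_mx sqnorm0 sqnorm_cV1 mxE add0r sqmodR expr1n.
- by rewrite in_pad_subspace /in_subspace trmx0 sub0mx.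
rewrite -[LHS]inf_range_cst; congr inf; apply: eq_imagel => k _.
by rewrite inner_pad_run inner0l mulr0 add0r mxE rmorph1 mul1r sqmodR sqr_sqrtr ?subr_ge0.
Qed.

Lemma fND_values_pad_le w y :
  fND_values (pad_qaut true) w y -> y <= lam * fND A w + (1 - lam).
Proof.
have [lam0 lam1] := andP lam01.
case=> psi [ns [u psiF ns_incr ->]]; have [p [q psiE]] := pad_vec_split psi; subst psi.
move: psiF; rewrite in_pad_subspace andbT => pF.
move/unit_vecP: u; rewrite sqnorm_col_mx sqnorm_cV1 => u.
have [G G_factor G_inf] := inner_run_factor w pF.
apply: le_trans (_ : _ <= lam * inf (range (G \o ns)) + (1 - lam)) _; last first.
  by rewrite lerD2r ler_wpM2l // G_inf.
apply: inf_range_affine_le => // [k|k|k]; first exact: sqmod_ge0.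
  exact: (G_factor _).1.
rewrite inner_pad_run /=; have [G0 Gp] := G_factor (ns k).
have := @sqmod_add_le _ _ _ (lam * G (ns k)) (1 - lam) (sqnorm p) (sqmod (q 0 0)).
rewrite u mulr1; apply; rewrite ?mulr_ge0 ?subr_ge0 ?sqnorm_ge0 ?sqmod_ge0 //.
  by rewrite sqmodM sqmodR sqr_sqrtr // Gp (mulrC (sqnorm p)) mulrA.
by rewrite sqmodM sqmodJ sqmodR sqr_sqrtr ?subr_ge0 // mulrC.
Qed.

Lemma fND_values_pad_ge w x eps : fND_values A w x -> 0 < eps ->
  exists2 y, fND_values (pad_qaut true) w y & lam * x + (1 - lam) - eps <= y.
Proof.
have [lam0 lam1] := andP lam01.
move=> Ax eps0; have /andP[x0 x1] := fND_values_itv Ax.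
case: Ax => psi [ns [u psiF ns_incr xE]].
set z := fun k => inner psi (run A w (ns k)).
have [e e1 [m m_incr z_aligned]] :=
  phase_aligned_subseq (fun k => sqmod_inner_run_le1 w (ns k) u) (divr_gt0 eps0 (ltr0Sn _ 1)).
have [al [be [al0 albe NE]]] := unit_weights_attaining_norm (Num.sqrt (1 - lam))
  (mulr_ge0 (sqrtr_ge0 lam) (sqrtr_ge0 x)).
rewrite exprMn !sqr_sqrtr ?subr_ge0 // in NE.
(* (al, be) maximises al sqrt(lam x) + be sqrt(1 - lam), and e is the phase
   of <psi|s_n> along the subsequence m. *)
pose psi' := col_mx (al%:C *: psi) (const_mx (conjc (be%:C * e)) : 'cV_1).
exists (inf (range (fun i => sqmod (inner psi' (run (pad_qaut true) w (ns (m i))))))).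
  exists psi', (ns \o m); split => //.
  - apply/unit_vecP; rewrite sqnorm_col_mx sqnormZ sqnorm_cV1 mxE sqmodJ sqmodM e1.
    by rewrite ((unit_vecP _).1 u) !sqmodR !mulr1.
  - by rewrite in_pad_subspace andbT /in_subspace linearZ /= scalemx_sub.
  - by move=> i; apply: (homo_ltn ltn_trans ns_incr); exact: m_incr.
apply: inf_range_ge => i; rewrite inner_pad_run innerZl mxE conjcK conjc_real.
rewrite mulrA -rmorphM mulrAC -rmorphM -/(z (m i)).
have sqrt_le1 c : c <= 1 -> Num.sqrt c <= 1 by move=> c1; rewrite -sqrtr1 ler_wsqrtr.
have a01 : 0 <= Num.sqrt lam * al <= 1.
  by rewrite mulr_ge0 ?sqrtr_ge0 // mulr_ile1 ?sqrtr_ge0 ?sqrt_le1 //; nra.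
have NE' : Num.sqrt lam * al * Num.sqrt x + be * Num.sqrt (1 - lam) =
    Num.sqrt (lam * x + (1 - lam)) by rewrite -NE; ring.
have N01 : 0 <= Num.sqrt lam * al * Num.sqrt x + be * Num.sqrt (1 - lam) <= 1.
  by rewrite NE' sqrtr_ge0 sqrt_le1 //; nra.
have x_le : Num.sqrt x <= normc (z (m i)).
  rewrite normc_sqmod ler_wsqrtr // xE.
  by apply: (inf_range_le (y := 0)) => k; exact: sqmod_ge0.
apply: le_trans (sqmod_add_aligned_ge e1 a01 _ N01 x_le (z_aligned i)); last first.
  by rewrite divr_ge0 // ltW.
rewrite NE' sqr_sqrtr; first lra.
by rewrite addr_ge0 ?mulr_ge0 ?subr_ge0.
Qed.

Lemma fND_pad_accept w : fND (pad_qaut true) w = lam * fND A w + (1 - lam).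
Proof.
have [lam0 _] := andP lam01.
apply/le_anti/andP; split.
  rewrite fNDE; apply: ge_sup; first by exists (1 - lam); exact: fND_values_pad_extra.
  by move=> y; exact: fND_values_pad_le.
rewrite !fNDE; apply: affine_sup_le => //.
- exact: has_ubound_fND_values.
- exact: fND_values_pad_extra.
- by move=> x eps; exact: fND_values_pad_ge.
Qed.

End Padding.

Section NullAutomaton.
Variables (R : realType) (Sigma : finType).
Local Open Scope classical_set_scope.

Lemma unit_vec_cV1 : unit_vec (const_mx 1 : 'cV[R[i]]_1).
Proof. by apply/unit_vecP; rewrite sqnorm_cV1 mxE sqmodR expr1n. Qed.

Definition null_qaut : qaut R Sigma :=
  @QAut R Sigma 1 (const_mx 1) (fun _ => 1%:M) 0 unit_vec_cV1 (fun _ => unitary1 _ _).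

Lemma fND_null_qaut w : fND null_qaut w = 0.
Proof.
rewrite fNDE; suff -> : fND_values null_qaut w = set0 by rewrite sup0.
apply/seteqP; split => // y [psi [ns [u psiF _ _]]].
move: psiF u; rewrite /in_subspace /= submx0 trmx_eq0 => /eqP ->.
by move/unit_vecP; rewrite sqnorm0 => /esym/eqP; rewrite oner_eq0.
Qed.

End NullAutomaton.

Unset Implicit Arguments.

Theorem proposition4 (R : realType) (Sigma : finType) :
  (forall lam : R, 0 <= lam <= 1 ->
     exists A : qaut R Sigma, forall w : nat -> Sigma, fND A w = lam) /\
  (forall (A : qaut R Sigma) (lam : R), 0 <= lam <= 1 ->
     exists B : qaut R Sigma, forall w : nat -> Sigma, fND B w = lam * fND A w) /\
  (forall (A : qaut R Sigma) (lam : R), 0 <= lam <= 1 ->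
     exists B : qaut R Sigma, forall w : nat -> Sigma,
       fND B w = lam * fND A w + (1 - lam)).
Proof.
split; [|split].
- move=> lam /andP[lam0 lam1].
  have lam'01 : 0 <= 1 - lam <= 1 by apply/andP; split; lra.
  exists (pad_qaut (null_qaut R Sigma) lam'01 true) => w.
  by rewrite fND_pad_accept fND_null_qaut mulr0 add0r subKr.
- by move=> A lam lam01; exists (pad_qaut A lam01 false) => w; exact: fND_pad_reject.
- by move=> A lam lam01; exists (pad_qaut A lam01 true) => w; exact: fND_pad_accept.
Qed.
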